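(* Let $K\subseteq\mathbb{R}^d$ be a convex body, $\Lambda\subseteq\mathbb{R}^d$ a lattice with basis $\{f_1,\dots,f_d\}$, and $i\in\{1,\dots,d\}$. For each $i$-element subset $I\subseteq\{1,\dots,d\}$ let $L_I=\operatorname{span}_{\mathbb{R}}\{f_k: k\in I\}$. If $\dim(K\cap L_I)=i$ for every $i$-element subset $I$, then $$\mu_i(K,\Lambda)\leqslant\max\Big\{\mu(K\cap L_I,\Lambda\cap L_I): I\subseteq\{1,\dots,d\},\ |I|=i\Big\}.$$
   Context: A convex body is a full-dimensional compact convex set; a lattice is a full-rank discrete subgroup. For a convex body $K\subseteq\mathbb{R}^d$ and $i\in\{1,\dots,d\}$, $\mu_i(K,\Lambda)=\min\{\mu\ge0: (\mu K+\Lambda)\cap U\ne\emptyset$ for every $(d-i)$-dimensional affine subspace $U\subseteq\mathbb{R}^d\}$. For a $k$-dimensional real vector space $E$, a lattice $\Gamma\subseteq E$ and a convex body $C\subseteq E$, the covering radius is $\mu(C,\Gamma)=\min\{\mu\ge0:\mu C+\Gamma=E\}$; here $\mu(K\cap L_I,\Lambda\cap L_I)$ is computed inside $L_I$. *)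

From HB Require Import structures.
From mathcomp Require Import all_boot all_order all_algebra.
From mathcomp Require Import all_classical all_reals all_analysis.
Set Implicit Arguments. Unset Strict Implicit. Unset Printing Implicit Defensive.
Import Order.TTheory GRing.Theory Num.Theory.
Import numFieldNormedType.Exports.
Local Open Scope classical_set_scope.
Local Open Scope ring_scope.

Section Defs.
Variables (R : realType) (d : nat).
Notation V := 'rV[R]_d.

Definition convex_subset (K : set V) : Prop :=
  forall x y t, K x -> K y -> 0 <= t -> t <= 1 -> K (t *: x + (1 - t) *: y).

Definition convex_body (K : set V) : Prop :=
  [/\ convex_subset K, compact K & (interior K) !=set0].

Definition lattice_of (f : 'M[R]_d) : set V :=
  [set x | exists z : 'I_d -> int, x = \sum_(k < d) (z k)%:~R *: row k f].

Definition span_rows (f : 'M[R]_d) (I : {set 'I_d}) : set V :=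
  [set x | exists c : 'I_d -> R, x = \sum_(k in I) c k *: row k f].

(* S contains k+1 affinely independent points *)
Definition has_aff_indep (S : set V) (k : nat) : Prop :=
  exists (p : V) (A : 'M[R]_(k, d)), [/\ S p, row_free A & forall j, S (p + row j A)].

Definition set_dim (S : set V) (k : nat) : Prop :=
  has_aff_indep S k /\ ~ has_aff_indep S k.+1.

Definition affine_subspace (U : set V) (k : nat) : Prop :=
  exists (p : V) (A : 'M[R]_(k, d)), row_free A /\ U = [set p + y *m A | y in [set: 'rV[R]_k]].

Definition dil_plus (mu : R) (K L : set V) : set V :=
  [set x | exists c g, [/\ K c, L g & x = mu *: c + g]].

Definition covering_minimum (K L : set V) (i : nat) : R :=
  inf [set mu : R | 0 <= mu /\
        forall U, affine_subspace U (d - i) -> (dil_plus mu K L `&` U) !=set0].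

Definition covering_radius_in (E C G : set V) : R :=
  inf [set mu : R | 0 <= mu /\ dil_plus mu C G = E].

End Defs.

(* A (d-i)-dimensional affine subspace U = p + row space of B is met by some
   L_I with |I| = i: by Steinitz exchange, B together with i of the rows f_k
   spans R^d.  Inside L_I, every point is a lattice point of L_I plus a point of
   the parallelepiped spanned by the f_k (k in I), whose coordinates with
   respect to the i-simplex contained in K /\ L_I are bounded; so a large
   dilate of that simplex absorbs it and the covering radius of K /\ L_I is
   finite.  By convexity, mu (K /\ L_I) + (Lambda /\ L_I) still covers L_I for
   every mu above that radius, hence mu K + Lambda meets U for every mu above
   the maximum. *)

From HB Require Import structures.
From mathcomp Require Import all_boot all_order all_algebra.
From mathcomp Require Import all_classical all_reals all_analysis.
From mathcomp Require Import zify lra.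
Import Order.TTheory GRing.Theory Num.Theory.
Local Open Scope classical_set_scope.
Local Open Scope ring_scope.
Set Implicit Arguments. Unset Strict Implicit. Unset Printing Implicit Defensive.

Section CoordinateBound.
Variable R : numFieldType.

Lemma coord_bounded m n p (F : 'M[R]_(m, p)) (A : 'M[R]_(n, p)) :
  (F <= A)%MS -> exists2 M, 0 <= M & forall t : 'rV_m, (forall k, 0 <= t 0 k <= 1) ->
    exists2 beta : 'rV_n, t *m F = beta *m A & forall j, `|beta 0 j| <= M.
Proof.
move=> FA; set C := F *m pinvmx A.
exists (\sum_k \sum_j `|C k j|); first by do 2!apply: sumr_ge0 => ? _.
move=> t t01; exists (t *m C); first by rewrite -mulmxA mulmxKpV.
move=> j; rewrite mxE (le_trans (ler_norm_sum _ _ _)) // exchange_big /=.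
rewrite (bigD1 j) //= -[X in X <= _]addr0 lerD //; last first.
  by apply: sumr_ge0 => *; apply: sumr_ge0.
apply: ler_sum => k _; rewrite mxE normrM ler_piMl ?normr_ge0 //.
by case/andP: (t01 k) => t0 t1; rewrite ger0_norm.
Qed.

End CoordinateBound.

Section LatticeSpans.
Variables (R : realType) (d : nat).
Implicit Types (f : 'M[R]_d) (I : {set 'I_d}) (K C G : set 'rV[R]_d).

Definition span_mx f I : 'M[R]_d := \matrix_(k, j) (if k \in I then f k j else 0).

Lemma row_span_mx f I k : row k (span_mx f I) = if k \in I then row k f else 0.
Proof. by apply/rowP => j; rewrite !mxE; case: ifP; rewrite ?mxE. Qed.

Lemma row_sub_span_mx f I k : k \in I -> (row k f <= span_mx f I)%MS.
Proof. by move=> kI; have := row_sub k (span_mx f I); rewrite row_span_mx kI. Qed.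

Lemma span_rowsE f I x : span_rows f I x <-> (x <= span_mx f I)%MS.
Proof.
split=> [[c ->]|/submxP[u ->]].
  by apply: summx_sub => k kI; apply/scalemx_sub/row_sub_span_mx.
exists (fun k => u 0 k); rewrite mulmx_sum_row [RHS]big_mkcond /=.
by apply: eq_bigr => k _; rewrite row_span_mx; case: ifP; rewrite ?scaler0.
Qed.

Lemma span_mxS f (I J : {set 'I_d}) : I \subset J -> (span_mx f I <= span_mx f J)%MS.
Proof.
move=> sIJ; apply/row_subP => k; rewrite row_span_mx.
by case: ifP => [kI|_]; [apply/row_sub_span_mx/(fintype.subsetP sIJ) | apply: sub0mx].
Qed.

Lemma span_mx0 f : span_mx f finset.set0 = 0.
Proof. by apply/matrixP => k j; rewrite !mxE finset.in_set0. Qed.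

Lemma rank_span_mx f I : (\rank (span_mx f I) <= #|I|)%N.
Proof.
apply: leq_trans (rank_leq_row (rowsub (@enum_val _ (mem I)) f)).
apply/mxrankS/row_subP => k; rewrite row_span_mx.
case: ifP => [kI|_]; last exact: sub0mx.
by rewrite -(enum_rankK_in kI kI) -row_rowsub row_sub.
Qed.

Lemma span_mx_complement f m (B : 'M[R]_(m, d)) n :
  row_free f -> (\rank B + n <= d)%N ->
  exists I, #|I| = n /\ \rank (B + span_mx f I)%MS = (\rank B + n)%N.
Proof.
move=> free_f; elim: n => [|n IH] le_Bn_d.
  by exists finset.set0; rewrite cards0 span_mx0 addsmx0 addn0.
have [|I [cardI rankX]] := IH; first by lia.
set X := (B + span_mx f I)%MS in rankX.
have [k fk_notin_X] : exists k, ~~ (row k f <= X)%MS.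
  by apply/row_subPn/negP => /mxrankS; rewrite (eqP free_f) rankX; lia.
have kI : k \notin I.
  apply: contra fk_notin_X => kI.
  by rewrite (submx_trans (row_sub_span_mx f kI)) ?addsmxSr.
exists (k |: I); rewrite cardsU1 kI cardI; split => //.
set Y := (B + span_mx f (k |: I))%MS.
have ltXY : (X < Y)%MS.
  rewrite ltmxE addsmxS ?span_mxS ?finset.subsetUr //=.
  apply: contra fk_notin_X => /(submx_trans _); apply.
  by rewrite (submx_trans (row_sub_span_mx f (setU11 k I))) ?addsmxSr.
move: ltXY; rewrite ltmxErank => /andP[_ ltXY].
have := rank_span_mx f (k |: I); rewrite cardsU1 kI cardI add1n.
have := (mxrank_adds_leqif B (span_mx f (k |: I))).1; rewrite -/Y; lia.
Qed.

Lemma affine_subspace_meets_span f U i :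
  row_free f -> (i <= d)%N -> affine_subspace U (d - i) ->
  exists I, #|I| = i /\ exists2 q, U q & span_rows f I q.
Proof.
move=> free_f le_id [p [B [free_B ->]]].
have [|I [cardI rank_full]] := @span_mx_complement f _ B i free_f.
  by rewrite (eqP free_B) subnK.
exists I; split => //.
have : (p <= B + span_mx f I)%MS.
  by apply: submx_full; rewrite /row_full rank_full (eqP free_B) subnK.
case/sub_addsmxP => -[u v] /= ->.
exists (v *m span_mx f I); last exact/span_rowsE/submxMl.
by exists (- u) => //; rewrite mulNmx addrAC subrr add0r.
Qed.

Lemma convex_subsetI K C : convex_subset K -> convex_subset C -> convex_subset (K `&` C).
Proof. by move=> cK cC x y t [Kx Cx] [Ky Cy] t0 t1; split; [apply: cK | apply: cC]. Qed.

Lemma convex_span_rows f I : convex_subset (span_rows f I).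
Proof.
move=> x y t /span_rowsE x_in /span_rowsE y_in _ _.
by apply/span_rowsE; rewrite addmx_sub ?scalemx_sub.
Qed.

Lemma convex_simplex K p n (a : 'I_n -> 'rV[R]_d) (lam : 'I_n -> R) :
  convex_subset K -> K p -> (forall j, K (p + a j)) ->
  (forall j, 0 <= lam j) -> \sum_j lam j <= 1 -> K (p + \sum_j lam j *: a j).
Proof.
move=> cK Kp; elim: n a lam => [|n IH] a lam Ka lam_ge0 lam_le1.
  by rewrite big_ord0 addr0.
rewrite big_ord_recr /=; rewrite big_ord_recr /= in lam_le1.
set s := lam ord_max in lam_le1 *; set w := widen_ord (leqnSn n) in lam_le1 *.
have sum_ge0 : 0 <= \sum_(j < n) lam (w j) by apply: sumr_ge0.
have [s1|s_neq1] := eqVneq s 1.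
  have lam0 j : lam (w j) = 0.
    apply: (psumr_eq0P (P := xpredT) (F := lam \o w)) => //=.
    by apply: le_anti; rewrite sum_ge0 andbT; lra.
  by rewrite big1 => [|j _]; rewrite ?lam0 ?scale0r // add0r s1 scale1r.
have s_lt1 : s < 1 by rewrite lt_neqAle s_neq1 /=; lra.
have Kq : K (p + \sum_(j < n) (lam (w j) / (1 - s)) *: a (w j)).
  apply: IH => [j|j|]; first exact: Ka.
    by rewrite divr_ge0 // subr_ge0 ltW.
  by rewrite -mulr_suml ler_pdivrMr ?subr_gt0 // mul1r; lra.
have := cK _ _ s (Ka ord_max) Kq (lam_ge0 _) (ltW s_lt1).
congr K; rewrite !scalerDr.
have -> : (1 - s) *: \sum_(j < n) (lam (w j) / (1 - s)) *: a (w j) =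
          \sum_(j < n) lam (w j) *: a (w j).
  rewrite scaler_sumr; apply: eq_bigr => j _.
  by rewrite scalerA mulrC divfK // subr_eq0 eq_sym.
by rewrite scalerBl scale1r addrACA [s *: p + _]addrC subrK [s *: _ + _]addrC.
Qed.

Lemma lattice_of_mulmx f (z : 'I_d -> int) : lattice_of f ((\row_k (z k)%:~R) *m f).
Proof. by exists z; rewrite mulmx_sum_row; apply: eq_bigr => k _; rewrite mxE. Qed.

Lemma span_mx_mod_lattice f I (x : 'rV[R]_d) : (x <= span_mx f I)%MS ->
  exists g (t : 'rV[R]_d), [/\ lattice_of f g, (g <= span_mx f I)%MS,
                  forall k, 0 <= t 0 k <= 1 & x = g + t *m span_mx f I].
Proof.
case/submxP => c ->; set fl := \row_k (Num.floor (c 0 k))%:~R : 'rV[R]_d.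
exists (fl *m span_mx f I), (c - fl); split.
- pose z k := if k \in I then Num.floor (c 0 k) else 0.
  suff -> : fl *m span_mx f I = (\row_k (z k)%:~R) *m f by apply: lattice_of_mulmx.
  rewrite !mulmx_sum_row; apply: eq_bigr => k _; rewrite row_span_mx !mxE /z.
  by case: ifP; rewrite ?scaler0 ?scale0r.
- exact: submxMl.
- move=> k; rewrite !mxE; have /andP[] := floor_itv (c 0 k).
  by rewrite intrD; lra.
- by rewrite -mulmxDl addrC subrK.
Qed.

Lemma simplex_absorbs_box C p n (A : 'M[R]_(n, d)) M (beta : 'rV[R]_n) :
  convex_subset C -> C p -> (forall j, C (p + row j A)) -> 0 <= M ->
  (forall j, `|beta 0 j| <= M) ->
  exists2 c, C c & (2 * n%:R * M + 1) *: c =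
                   (2 * n%:R * M + 1) *: p + (const_mx M + beta) *m A.
Proof.
move=> cC Cp CA M_ge0 beta_le; set mu := 2 * n%:R * M + 1.
have mu_gt0 : 0 < mu by rewrite /mu; have := ler0n R n; nra.
(* The weights (M + beta_j) / mu lie in [0, 2M/mu], so they sum to at most 2nM/mu <= 1. *)
set lam := mu^-1 *: (const_mx M + beta).
have lam_le j : 0 <= lam 0 j <= 2 * M / mu.
  have := beta_le j; rewrite ler_norml => /andP[lo hi].
  rewrite !mxE mulrC divr_ge0 ?ler_pM2r ?invr_gt0 //=; lra.
exists (p + lam *m A); last by rewrite scalerDr -scalemxAl scalerA divff ?gt_eqF ?scale1r.
rewrite mulmx_sum_row; apply: convex_simplex => // [j|].
  by case/andP: (lam_le j).
apply: le_trans (ler_sum _ (fun j _ => proj2 (andP (lam_le j)))) _.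
rewrite sumr_const card_ord -[_ *+ n]mulr_natl mulrA ler_pdivrMr // mul1r /mu; lra.
Qed.

Lemma dil_plus_grow C G c0 s T x : convex_subset C -> C c0 -> 0 <= s <= T -> 0 < T ->
  dil_plus s C G (x - (T - s) *: c0) -> dil_plus T C G x.
Proof.
move=> cC Cc0 /andP[s_ge0 s_le_T] T_gt0 [c [g [Cc Gg /(canRL (subrK _)) ->]]].
have sT01 : 0 <= s / T <= 1 by rewrite divr_ge0 ?ler_pdivrMr ?mul1r ?(ltW T_gt0).
exists (s / T *: c + (1 - s / T) *: c0), g; split => //.
  by case/andP: sT01 => *; apply: cC.
have TsT : T * (s / T) = s by rewrite mulrC divfK ?gt_eqF.
by rewrite scalerDr !scalerA TsT mulrBr mulr1 TsT addrAC.
Qed.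

Lemma covering_radius_set_nonempty f K I :
  convex_subset K -> has_aff_indep (K `&` span_rows f I) #|I| ->
  exists2 mu, 0 <= mu & dil_plus mu (K `&` span_rows f I) (lattice_of f `&` span_rows f I)
                        = span_rows f I.
Proof.
move=> cK [p [A [KLp free_A KLA]]].
have cKL := convex_subsetI cK (@convex_span_rows f I).
have Lp : (p <= span_mx f I)%MS by apply/span_rowsE; case: KLp.
have A_sub : (A <= span_mx f I)%MS.
  apply/row_subP => j; have [_ /span_rowsE Lpj] := KLA j.
  by rewrite -(addKr p (row j A)) addmx_sub ?eqmx_opp.
have span_sub : (span_mx f I <= A)%MS.
  case: (mxrank_leqif_sup A_sub) => _ <-.
  by rewrite eqn_leq mxrankS //= (eqP free_A) rank_span_mx.
have [M M_ge0 coordM] := coord_bounded span_sub.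
set mu := 2 * #|I|%:R * M + 1; exists mu; first by rewrite /mu; have := ler0n R #|I|; nra.
apply/seteqP; split=> x.
  case=> c [g [[_ /span_rowsE Lc] [_ /span_rowsE Lg] ->]].
  by apply/span_rowsE; rewrite addmx_sub ?scalemx_sub.
move=> /span_rowsE Lx; set y := x - mu *: p - const_mx M *m A.
have Ly : (y <= span_mx f I)%MS.
  by rewrite !addmx_sub ?eqmx_opp ?scalemx_sub ?(submx_trans (submxMl _ _) A_sub).
have [g [t [Gg Lg t01 yE]]] := span_mx_mod_lattice Ly.
have [beta tE beta_le] := coordM t t01.
have [c KLc cE] := simplex_absorbs_box cKL KLp KLA M_ge0 beta_le.
exists c, g; split => //; first by split => //; apply/span_rowsE.
have betaE : beta *m A = y - g by rewrite -tE yE [g + _]addrC addrK.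
rewrite cE mulmxDl betaE addrA [_ + (y - g)]addrA subrK.
by rewrite /y -[x - _ - _]addrA -opprD addrC subrK.
Qed.

Lemma span_rows_covered f K I T :
  convex_subset K -> has_aff_indep (K `&` span_rows f I) #|I| ->
  covering_radius_in (span_rows f I) (K `&` span_rows f I)
                     (lattice_of f `&` span_rows f I) < T ->
  span_rows f I `<=` dil_plus T (K `&` span_rows f I) (lattice_of f `&` span_rows f I).
Proof.
move=> cK indep; rewrite /covering_radius_in; set S := [set mu | _] => radius_lt_T x Lx.
have [mu0 mu0_ge0 mu0_covers] := covering_radius_set_nonempty cK indep.
have S_inf : has_inf S by split; [exists mu0 | exists 0 => ? []].
have eps_gt0 : 0 < T - inf S by rewrite subr_gt0.
have [s [s_ge0 s_covers] s_lt_T] := inf_adherent eps_gt0 S_inf.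
rewrite addrC subrK in s_lt_T.
have [p [_ [[Kp Lp] _ _]]] := indep.
apply: (dil_plus_grow (s := s) (convex_subsetI cK (@convex_span_rows f I)) (conj Kp Lp)).
- by rewrite s_ge0 ltW.
- exact: le_lt_trans s_lt_T.
- rewrite s_covers; apply/span_rowsE.
  by rewrite addmx_sub ?eqmx_opp ?scalemx_sub //; apply/span_rowsE.
Qed.

End LatticeSpans.

Theorem theorem1p3 (R : realType) (d : nat) (K : set 'rV[R]_d) (f : 'M[R]_d) (i : nat) :
  convex_body K -> row_free f -> (1 <= i <= d)%N ->
  (forall I : {set 'I_d}, #|I| = i ->
     set_dim (K `&` span_rows f I) i) ->
  covering_minimum K (lattice_of f) i <=
    \big[Num.max/0]_(I : {set 'I_d} | #|I| == i)
       covering_radius_in (span_rows f I) (K `&` span_rows f I)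
                          (lattice_of f `&` span_rows f I).
Proof.
move=> [cK _ _] free_f /andP[_ le_id] dimKL.
set rho := \big[Num.max/0]_(I | _) _; have rho_ge0 : 0 <= rho by apply: bigmax_ge_id.
apply/ler_addgt0Pr => e e_gt0; apply: ge_inf; first by exists 0 => ? [].
split=> [|U affU]; first by lra.
have [I [cardI [q Uq Lq]]] := affine_subspace_meets_span free_f le_id affU.
have indep : has_aff_indep (K `&` span_rows f I) #|I| by rewrite cardI; case: (dimKL I cardI).
have radius_le : covering_radius_in (span_rows f I) (K `&` span_rows f I)
                   (lattice_of f `&` span_rows f I) <= rho.
  by apply: (bigmax_sup_seq _ I) => //; rewrite ?mem_index_enum ?cardI.
have radius_lt : covering_radius_in (span_rows f I) (K `&` span_rows f I)
                   (lattice_of f `&` span_rows f I) < rho + e by lra.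
have [c [g [[Kc _] [Gg _] qE]]] := span_rows_covered cK indep radius_lt Lq.
by exists q; split=> //; exists c, g.
Qed.
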